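(* Let $k \in \mathbb{Z}_{\geq 0}$ and let $\gamma_X$ be a $(2k+2)$-DMS. Then $\operatorname{supp} H_k(\mathcal{R}^{\mathrm{lev}}(\gamma_X))$ is a convex subset of $\mathbf{Dyn}$, i.e. whenever $p \leq q \leq r$ in $\mathbf{Dyn}$ with $p, r$ in the support, also $q$ is in the support.
   Context: A dynamic metric space (DMS) $\gamma_X = (X, d_X(\cdot))$ is a finite set $X$ with a function $d_X : \mathbb{R} \times X \times X \to \mathbb{R}_{\geq 0}$ such that for each $t$, $d_X(t)$ is a pseudometric on $X$, and for each $x,x'$ the map $t \mapsto d_X(t)(x,x')$ is continuous. A $(2k+2)$-DMS is a DMS with $|X| = 2k+2$. For a compact interval $I \subset \mathbb{R}$, $d_X(I)(x,x') := \inf_{t \in I} d_X(t)(x,x')$ (a semimetric). For a semimetric $d$ on $X$ and $\delta \geq 0$, the Rips complex $\mathcal{R}_\delta(d)$ is the abstract simplicial complex on $X$ whose simplices are the finite nonempty $\sigma \subseteq X$ with $d(x,y) \leq \delta$ for all $x,y \in \sigma$. $\mathbf{Dyn}$ is the poset of pairs $(I,\delta)$ with $I$ a compact interval of $\mathbb{R}$ and $\delta \geq 0$, with $(I,\delta) \leq (I',\delta')$ iff $I \subseteq I'$ and $\delta \leq \delta'$. $\mathcal{R}^{\mathrm{lev}}(\gamma_X) : \mathbf{Dyn} \to \mathbf{Simp}$ sends $(I,\delta)$ to $\mathcal{R}_\delta(d_X(I))$ with inclusion maps, and $H_k(\mathcal{R}^{\mathrm{lev}}(\gamma_X))$ is its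 degree-$k$ simplicial homology over a fixed field $\mathbb{F}$. For this module every pointwise dimension is $0$ or $1$, and its support is the set of $p \in \mathbf{Dyn}$ where the vector space is nonzero. *)

From HB Require Import structures.
From mathcomp Require Import all_boot all_order all_algebra.
From mathcomp Require Import all_classical all_reals all_analysis.
Set Implicit Arguments. Unset Strict Implicit. Unset Printing Implicit Defensive.
Import Order.TTheory GRing.Theory Num.Theory.
Import numFieldNormedType.Exports.
Local Open Scope classical_set_scope.
Local Open Scope ring_scope.

Definition is_pseudometric (R : realType) (X : finType) (d : X -> X -> R) : Prop :=
  [/\ (forall x, d x x = 0), (forall x y, 0 <= d x y),
      (forall x y, d x y = d y x) & (forall x y z, d x z <= d x y + d y z)].

Definition is_DMS (R : realType) (X : finType) (d : R -> X -> X -> R) : Prop :=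
  (forall t, is_pseudometric (d t)) /\ (forall x y, continuous (fun t : R => d t x y)).

Definition dist_on (R : realType) (X : finType) (d : R -> X -> X -> R)
  (a b : R) (x y : X) : R :=
  inf [set d t x y | t in [set t : R | a <= t <= b]].

Definition rips (R : realType) (X : finType) (dd : X -> X -> R) (delta : R)
  : pred {set X} :=
  fun s => (s != finset.set0) && [forall x in s, forall y in s, dd x y <= delta].

(** Simplicial homology over a field F of a simplicial complex S on X
    (S given by its set of simplices), via chains indexed by {set X}. *)
Definition face_sign (F : fieldType) (X : finType) (s : {set X}) (v : X) : F :=
  (-1) ^+ #|[set u in s | (enum_rank u < enum_rank v)%N]|.

(** Boundary matrix d_k : C_k -> C_{k-1} (row-vector convention: row = k-simplex,
    column = (k-1)-simplex); k-simplices are simplices with k+1 vertices. *)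
Definition bd_mx (F : fieldType) (X : finType) (S : pred {set X}) (k : nat)
  : 'M[F]_(#|{set X}|) :=
  \matrix_(i, j)
    (let s := enum_val i in let t := enum_val j in
     if [&& S s, S t & #|s| == k.+1]
     then \sum_(v in s | t == (s :\ v)%SET) face_sign F s v else 0).

(** Projection onto the span of the k-simplices (the chain space C_k). *)
Definition chain_mx (F : fieldType) (X : finType) (S : pred {set X}) (k : nat)
  : 'M[F]_(#|{set X}|) :=
  \matrix_(i, j)
    (if (i == j) && S (enum_val i) && (#|enum_val i| == k.+1) then 1 else 0).

(** H_k(S; F) <> 0, i.e. the cycles Z_k = C_k ∩ ker d_k are not contained in the
    boundaries B_k = im d_{k+1}. *)
Definition Hk_nonzero (F : fieldType) (X : finType) (S : pred {set X}) (k : nat) : bool :=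
  ~~ ((chain_mx F S k :&: kermx (bd_mx F S k)) <= bd_mx F S k.+1)%MS.

Record dyn (R : realType) := Dyn { dyn_a : R; dyn_b : R; dyn_delta : R }.

Definition dyn_valid (R : realType) (p : dyn R) : Prop :=
  dyn_a p <= dyn_b p /\ 0 <= dyn_delta p.

Definition dyn_le (R : realType) (p q : dyn R) : Prop :=
  [/\ dyn_a q <= dyn_a p, dyn_b p <= dyn_b q & dyn_delta p <= dyn_delta q].

Definition in_supp (R : realType) (F : fieldType) (X : finType)
  (d : R -> X -> X -> R) (k : nat) (p : dyn R) : Prop :=
  Hk_nonzero F (rips (dist_on d (dyn_a p) (dyn_b p)) (dyn_delta p)) k.

(* The Rips complex at p = (I, delta) is the flag complex of the graph E_p in which
   x ~ y iff d_X(I)(x, y) <= delta, and p <= q gives E_p <= E_q.  A flag complex with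
   nonzero reduced homology in degree n has at least 2n + 2 vertices: if a vertex v is
   adjacent to all others the complex is a cone, and otherwise the decomposition of a
   cycle into its part away from v and the cone over a cycle in the link of v reduces
   the claim to the link (at least two vertices fewer) and to the deletion of v.  Hence
   for 2k + 2 vertices and k >= 1, H_k <> 0 forces every vertex to have exactly one
   non-neighbour.  If E_p and E_r are both of this form and E_p <= E_q <= E_r, then the
   non-neighbour of x in E_r is also one in E_p, hence the unique one, so E_q = E_p.
   For k = 0, H_0 never vanishes since X is nonempty. *)
From HB Require Import structures.
From mathcomp Require Import all_boot all_order all_algebra.
From mathcomp Require Import all_classical all_reals all_analysis.
(* Re-imported so that set0, setT and subsetP denote the finite-set notions, not the
   classical_sets ones. *)
From mathcomp Require Import fintype finset zify.
Set Implicit Arguments. Unset Strict Implicit. Unset Printing Implicit Defensive.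
Import Order.TTheory GRing.Theory Num.Theory.
Local Open Scope ring_scope.

Section FaceSign.
Variables (F : fieldType) (X : finType).
Local Notation sgn := (@face_sign F X).

Lemma face_sign_sqr (s : {set X}) v : sgn s v * sgn s v = 1.
Proof. by rewrite /face_sign -expr2 sqrr_sign. Qed.

Lemma face_sign_neq0 (s : {set X}) v : sgn s v != 0.
Proof. by rewrite /face_sign signr_eq0. Qed.

Lemma face_sign_set0 v : sgn set0 v = 1.
Proof.
by rewrite /face_sign (eq_card (B := pred0)) ?card0 // => u; rewrite !inE.
Qed.

Lemma face_sign_setU1 (s : {set X}) u v : u \notin s ->
  sgn (u |: s) v = (-1) ^+ (enum_rank u < enum_rank v)%N * sgn s v.
Proof.
move=> us; rewrite /face_sign -exprD; congr (_ ^+ _).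
have [lt_uv|ge_uv] := boolP (enum_rank u < enum_rank v)%N.
  have -> : [set w in u |: s | (enum_rank w < enum_rank v)%N] =
      u |: [set w in s | (enum_rank w < enum_rank v)%N].
    by apply/setP => w; rewrite !inE; case: eqP => [->|].
  by rewrite cardsU1 inE (negbTE us).
rewrite add0n; apply: eq_card => w.
by rewrite !inE; case: eqP => [->|_]; rewrite ?(negbTE ge_uv) ?andbF.
Qed.

Lemma face_sign_setU1_id (s : {set X}) v : sgn (v |: s) v = sgn s v.
Proof.
rewrite /face_sign; congr (_ ^+ _); apply: eq_card => u.
by rewrite !inE; case: eqP => [->|_]; rewrite ?ltnn ?andbF.
Qed.

Lemma sign_rank_antisym (u v : X) : u != v ->
  (-1) ^+ (enum_rank u < enum_rank v)%N = - (-1) ^+ (enum_rank v < enum_rank u)%N :> F.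
Proof.
rewrite -(inj_eq enum_rank_inj) neq_ltn => /orP[] lt_uv;
  by rewrite lt_uv ltnNge ltnW //= ?opprK.
Qed.

Lemma face_sign_swap (s : {set X}) u v : u != v -> u \notin s -> v \notin s ->
  sgn (v |: s) u * sgn (u |: s) v = - (sgn s v * sgn s u).
Proof.
move=> uv us vs; rewrite !face_sign_setU1 // sign_rank_antisym 1?eq_sym //.
by rewrite !mulNr mulrACA -expr2 sqrr_sign mul1r mulrC.
Qed.

Lemma face_sign_pair a b : a != b -> sgn [set b] a + sgn [set a] b = 0.
Proof.
move=> ab; rewrite -[[set b]]setU0 -[[set a]]setU0.
rewrite !face_sign_setU1 ?inE 1?eq_sym // !face_sign_set0 !mulr1.
by rewrite sign_rank_antisym 1?eq_sym // addNr.
Qed.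

End FaceSign.

Section Chains.
Variables (F : fieldType) (X : finType).
Implicit Types (c : {set X} -> F) (s t : {set X}) (u v : X).
Local Notation sgn := (face_sign F).

Definition bnd c : {set X} -> F :=
  fun t => \sum_(v | v \notin t) sgn t v * c (v |: t).

Definition is_cycle c := forall t, bnd c t = 0.

Definition cone v c : {set X} -> F :=
  fun s => if v \in s then sgn (s :\ v) v * c (s :\ v) else 0.

Definition deletion v c : {set X} -> F := fun s => if v \in s then 0 else c s.

Definition link v c : {set X} -> F :=
  fun t => if v \in t then 0 else sgn t v * c (v |: t).

Lemma eq_bnd c1 c2 : c1 =1 c2 -> bnd c1 =1 bnd c2.
Proof. by move=> eq_c t; apply: eq_bigr => v _; rewrite eq_c. Qed.

Lemma bndD c1 c2 t : bnd (c1 \+ c2) t = bnd c1 t + bnd c2 t.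
Proof. by rewrite /bnd -big_split; apply: eq_bigr => v _; rewrite mulrDr. Qed.

Lemma bndB c1 c2 t : bnd (c1 \- c2) t = bnd c1 t - bnd c2 t.
Proof. by rewrite /bnd -sumrB; apply: eq_bigr => v _; rewrite mulrBr. Qed.

Lemma bnd_cone v c t : bnd (cone v c) t = c t - cone v (bnd c) t.
Proof.
rewrite /cone; have [vt|vt] := boolP (v \in t); last first.
  rewrite /bnd (bigD1 v) //= setU11 setU1K // mulrA face_sign_sqr mul1r.
  rewrite big1 ?addr0 ?subr0 // => u /andP[ut uv].
  by rewrite in_setU1 eq_sym (negbTE uv) (negbTE vt) mulr0.
set t' := t :\ v; have tE : t = v |: t' by rewrite setD1K.
have vt' : v \notin t' by rewrite !inE eqxx.
rewrite /bnd (bigD1 v vt') /= -tE mulrDr mulrA face_sign_sqr mul1r.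
rewrite opprD addrA subrr add0r mulr_sumr -sumrN.
rewrite [in RHS](eq_bigl (fun u => u \notin t)) => [|u]; last first.
  by rewrite !inE; case: eqP => [->|_] /=; rewrite ?vt ?andbT.
apply: eq_bigr => u ut; have uv : u != v by apply: contraNneq ut => ->.
have ut' : u \notin t' by rewrite !inE negb_and uv.
have -> : (u |: t) :\ v = u |: t'.
  by rewrite tE setUCA setU1K // in_setU1 negb_or eq_sym uv.
by rewrite in_setU1 vt orbT tE mulrA face_sign_swap // mulNr mulrA.
Qed.

Lemma deletion_link v c s : c s = deletion v c s + cone v (link v c) s.
Proof.
rewrite /deletion /cone /link; case: ifP => vs; last by rewrite addr0.
by rewrite add0r !inE eqxx /= setD1K // mulrA face_sign_sqr mul1r.
Qed.

Lemma bnd_deletion_link v c t :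
  bnd c t = bnd (deletion v c) t + (link v c t - cone v (bnd (link v c)) t).
Proof. by rewrite (eq_bnd (deletion_link v c)) bndD bnd_cone. Qed.

Lemma bnd_deletion_mem v c t : v \in t -> bnd (deletion v c) t = 0.
Proof.
by move=> vt; rewrite /bnd big1 // => u _; rewrite /deletion in_setU1 vt orbT mulr0.
Qed.

Lemma link_is_cycle v c : is_cycle c -> is_cycle (link v c).
Proof.
move=> cyc t; have [vt|vt] := boolP (v \in t).
  by rewrite /bnd big1 // => u _; rewrite /link in_setU1 vt orbT mulr0.
have := bnd_deletion_link v c (v |: t).
rewrite cyc bnd_deletion_mem ?setU11 // /link /cone setU11 setU1K // add0r sub0r.
by move/esym/eqP; rewrite oppr_eq0 mulf_eq0 (negbTE (face_sign_neq0 _ _ _)) => /eqP.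
Qed.

Lemma bnd_deletion v c t : is_cycle c -> bnd (deletion v c) t + link v c t = 0.
Proof.
move=> cyc; have [vt|vt] := boolP (v \in t).
  by rewrite bnd_deletion_mem // /link vt addr0.
by have := bnd_deletion_link v c t; rewrite cyc /cone (negbTE vt) subr0 => <-.
Qed.

Lemma sum_cofacets (G : {set X} -> X -> F) t :
  \sum_(s : {set X}) \sum_(v in s | t == s :\ v) G s v =
  \sum_(v | v \notin t) G (v |: t) v.
Proof.
rewrite (exchange_big_dep xpredT) //= [RHS]big_mkcond; apply: eq_bigr => v _.
have [vt|vt] := boolP (v \in t).
  rewrite big_pred0 // => s; apply/andP => -[_ /eqP tE].
  by move: vt; rewrite tE !inE eqxx.
rewrite (big_pred1 (v |: t)) // => s /=.
apply/andP/eqP => [[vs /eqP ->]|->]; first by rewrite setD1K.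
by rewrite setU11 setU1K.
Qed.

Lemma sum_facets (G : {set X} -> X -> F) :
  \sum_(t : {set X}) \sum_(v | v \notin t) G t v =
  \sum_(s : {set X}) \sum_(v in s) G (s :\ v) v.
Proof.
rewrite (exchange_big_dep xpredT) //= [RHS](exchange_big_dep xpredT) //=.
apply: eq_bigr => v _.
rewrite [RHS](reindex_onto (fun t => v |: t) (fun s => s :\ v)) /=; last first.
  by move=> s vs; rewrite setD1K.
apply: eq_big => [t|t vt]; last by rewrite setU1K.
rewrite setU11 /=; apply/idP/eqP => [vt|<-]; first by rewrite setU1K.
by rewrite !inE eqxx.
Qed.

Lemma sum_bnd_vertices c : (forall s, c s != 0 -> #|s| = 2) ->
  \sum_(t : {set X} | #|t| == 1%N) bnd c t = 0.
Proof.
move=> c2; rewrite big_mkcond /=.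
transitivity (\sum_(t : {set X}) \sum_(v | v \notin t)
                (#|t| == 1%N)%:R * (sgn t v * c (v |: t))).
  apply: eq_bigr => t _; rewrite /bnd; case: eqP => _.
    by apply: eq_bigr => v _; rewrite mul1r.
  by rewrite big1 // => v _; rewrite mul0r.
rewrite sum_facets; apply: big1 => s _.
have [cs0|/c2/eqP/cards2P[a [b [ab ->]]]] := eqVneq (c s) 0.
  by rewrite big1 // => v vs; rewrite setD1K // cs0 !mulr0.
rewrite big_setU1 ?inE //= big_set1.
have -> : [set a; b] :\ b = [set a] by rewrite setUC setU1K // inE eq_sym.
rewrite setU1K ?inE // !cards1 eqxx !mul1r.
by rewrite [[set b; a]]setUC -mulrDl face_sign_pair // mul0r.
Qed.

End Chains.

Section Flag.
Variables (X : finType) (E : rel X).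
Hypotheses (E_refl : reflexive E) (E_sym : symmetric E).
Implicit Types (s t V W : {set X}) (u v w x : X).

Definition clique s := [forall x in s, forall y in s, E x y].

Definition flag : pred {set X} := fun s => (s != set0) && clique s.

Definition neighbours V v := [set u in V | (u != v) && E v u].

Definition non_neighbours V v := [set u in V | ~~ E v u].

Lemma cliqueP s : reflect {in s &, forall x y, E x y} (clique s).
Proof.
apply: (iffP forall_inP) => [cl x y xs ys | cl x xs]; first exact: (forall_inP (cl x xs)).
by apply/forall_inP => y ys; apply: cl.
Qed.
Arguments cliqueP {s}.

Lemma clique_subset s s' : s' \subset s -> clique s -> clique s'.
Proof. by move=> /subsetP ss /cliqueP cl; apply/cliqueP => x y /ss xs /ss; apply: cl. Qed.

Lemma clique_setU1 v s : {in s, forall u, E v u} -> clique s -> clique (v |: s).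
Proof.
move=> Ev /cliqueP cl; apply/cliqueP => x y /setU1P[->|xs] /setU1P[->|ys].
- exact: E_refl.
- exact: Ev.
- by rewrite E_sym; apply: Ev.
- exact: cl.
Qed.

Lemma flag1 x : flag [set x].
Proof.
rewrite /flag -card_gt0 cards1 /=.
by apply/cliqueP => y z /set1P -> /set1P ->; apply: E_refl.
Qed.

Lemma card_neighbours V v : v \in V ->
  #|V| = (#|neighbours V v| + #|non_neighbours V v|).+1.
Proof.
move=> vV; rewrite (cardsD1 v V) vV add1n -cardsUI.
have -> : neighbours V v :&: non_neighbours V v = set0.
  by apply/setP => u; rewrite !inE; case: (E v u); rewrite !andbF.
rewrite cards0 addn0; congr (_.+1); apply: eq_card => u; rewrite !inE.
case: (eqVneq u v) => [->|_]; first by rewrite E_refl !andbF.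
by case: (E v u); rewrite /= ?andbT ?andbF ?orbF.
Qed.

Variable F : fieldType.
Implicit Types (c b : {set X} -> F).

Definition chain_on V n c :=
  forall s, c s != 0 -> [/\ s \subset V, clique s & #|s| = n].

(** Chains are indexed by all cliques, the empty one included, so
    [acyclic V n.+1] says that the reduced homology H_n of the flag complex of
    [E] restricted to [V] vanishes. *)
Definition acyclic V n :=
  forall c, chain_on V n c -> is_cycle c -> exists2 b, chain_on V n.+1 b & bnd b =1 c.

Lemma chain_on_sub V W n c : V \subset W -> chain_on V n c -> chain_on W n c.
Proof. by move=> VW cV s /cV[sV cl sz]; rewrite (subset_trans sV VW). Qed.

Lemma chain_onD V n c1 c2 :
  chain_on V n c1 -> chain_on V n c2 -> chain_on V n (c1 \+ c2).
Proof.
by move=> c1V c2V s /=; case: (eqVneq (c1 s) 0) => [->|/c1V //]; rewrite add0r => /c2V.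
Qed.

Lemma chain_onB V n c1 c2 :
  chain_on V n c1 -> chain_on V n c2 -> chain_on V n (c1 \- c2).
Proof.
move=> c1V c2V s /=; case: (eqVneq (c1 s) 0) => [->|/c1V //].
by rewrite sub0r oppr_eq0 => /c2V.
Qed.

Lemma chain_on_cone W V n v c : v \in V -> W \subset V -> {in W, forall u, E v u} ->
  chain_on W n c -> chain_on V n.+1 (cone v c).
Proof.
move=> vV WV Ev cW s; rewrite /cone; case: ifP => [vs|_]; last by rewrite eqxx.
rewrite mulf_eq0 negb_or => /andP[_ /cW[sW cl sz]]; rewrite -(setD1K vs).
split; first by rewrite subUset sub1set vV (subset_trans sW WV).
  by apply: clique_setU1 cl => u /(subsetP sW); apply: Ev.
by rewrite cardsU1 !inE eqxx sz.
Qed.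

Lemma chain_on_link V n v c :
  chain_on V n.+1 c -> chain_on (neighbours V v) n (link v c).
Proof.
move=> cV t; rewrite /link; case: ifP => [_|vt]; first by rewrite eqxx.
rewrite mulf_eq0 negb_or => /andP[_ /cV[/subsetP tV cl]]; rewrite cardsU1 vt => -[sz].
split=> //; last exact: clique_subset (subsetUr _ _) cl.
apply/subsetP => u ut; rewrite !inE tV ?in_setU1 ?ut ?orbT //=.
rewrite (cliqueP cl) ?setU11 ?in_setU1 ?ut ?orbT // andbT.
by apply: contraFneq vt => <-.
Qed.

Lemma chain_on_deletion V n v c : chain_on V n c -> chain_on (V :\ v) n (deletion v c).
Proof.
move=> cV s; rewrite /deletion; case: ifP => [_|vs]; first by rewrite eqxx.
move=> /cV[/subsetP sV cl sz]; split=> //; apply/subsetP => u us.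
by rewrite !inE sV // andbT; apply: contraFneq vs => <-.
Qed.

Lemma acyclic_cone V n v : v \in V -> {in V, forall u, E v u} -> acyclic V n.
Proof.
move=> vV Ev c cV cyc; exists (cone v c); first exact: chain_on_cone (subxx V) Ev cV.
by move=> t; rewrite bnd_cone /cone; case: ifP => _; rewrite ?cyc ?mulr0 subr0.
Qed.

Lemma acyclic_step V n v : v \in V ->
  acyclic (neighbours V v) n -> acyclic (V :\ v) n.+1 -> acyclic V n.+1.
Proof.
move=> vV acN acD c cV cyc.
have [b1 b1N bnd_b1] := acN _ (chain_on_link cV) (link_is_cycle v cyc).
have ND : neighbours V v \subset V :\ v.
  by apply/subsetP => u; rewrite !inE => /and3P[-> -> _].
have cD : chain_on (V :\ v) n.+1 (deletion v c \+ b1).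
  exact: chain_onD (chain_on_deletion cV) (chain_on_sub ND b1N).
have cycD : is_cycle (deletion v c \+ b1).
  by move=> t; rewrite bndD bnd_b1 bnd_deletion.
have [b2 b2D bnd_b2] := acD _ cD cycD.
(* c = deletion v c + cone v (bnd b1) and deletion v c + b1 = bnd b2, while
   bnd (cone v b1) = b1 - cone v (bnd b1). *)
exists (b2 \- cone v b1).
  apply: chain_onB; first exact: chain_on_sub (subD1set V v) b2D.
  apply: chain_on_cone vV (subset_trans ND (subD1set V v)) _ b1N.
  by move=> u; rewrite inE => /and3P[].
move=> t; rewrite bndB bnd_b2 bnd_cone [RHS](deletion_link v) /=.
have -> : cone v (bnd b1) t = cone v (link v c) t by rewrite /cone bnd_b1.
by rewrite opprB addrACA subrr addr0.
Qed.

Lemma acyclic_set0 n : acyclic set0 n.+1.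
Proof.
move=> c c0 _; exists (fun=> 0); first by move=> s; rewrite eqxx.
move=> t; rewrite /bnd big1 => [|v _]; last by rewrite mulr0.
apply/esym/eqP; apply: contraT => /c0[]; rewrite subset0 => /eqP -> _.
by rewrite cards0.
Qed.

Lemma acyclic_small V n : (#|V| < 2 * n + 2)%N -> acyclic V n.+1.
Proof.
have [m] := ubnP #|V|; elim: m V n => // m IH V n /ltnSE leVm small.
have [->|[v vV]] := set_0Vmem V; first exact: acyclic_set0.
have [Ev|] := boolP [forall (u | u \in V), E v u].
  by apply: (acyclic_cone vV) => u; apply: (forall_inP Ev).
rewrite negb_forall_in => /existsP[w /andP[wV nEvw]].
have : (0 < #|non_neighbours V v|)%N by apply/card_gt0P; exists w; rewrite inE wV.
move: (card_neighbours vV) (cardsD1 v V); rewrite vV.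
case: n small => [|n] small cardV cardD N_gt0; first lia.
by apply: (acyclic_step vV); apply: IH; lia.
Qed.

Lemma acyclic_setT_degree n x : #|X| = (2 * n + 4)%N ->
  #|non_neighbours setT x| != 1%N -> acyclic setT n.+2.
Proof.
move=> cardX degx; have [N0|N_gt0] := posnP #|non_neighbours setT x|.
  apply: (acyclic_cone (in_setT x)) => u _.
  by move: (card0_eq N0 u); rewrite !inE => /negbFE.
move: (card_neighbours (in_setT x)) (cardsD1 x setT); rewrite cardsT in_setT.
move=> cardN cardD; apply: (acyclic_step (in_setT x)); apply: acyclic_small; lia.
Qed.

Lemma chain_on_flag n c s : chain_on setT n.+1 c -> c s != 0 -> flag s.
Proof. by move=> cT /cT[_ cl sz]; rewrite /flag cl -card_gt0 sz. Qed.

Lemma bnd_eq0_card V n c t : chain_on V n c -> #|t|.+1 != n -> bnd c t = 0.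
Proof.
move=> cV szt; rewrite /bnd big1 // => v vt.
have [->|/cV[_ _]] := eqVneq (c (v |: t)) 0; first by rewrite mulr0.
by rewrite cardsU1 vt add1n => sz; rewrite sz eqxx in szt.
Qed.

Lemma bnd_nonflag n c t : chain_on setT n.+2 c -> ~~ flag t -> bnd c t = 0.
Proof.
move=> cT nft; rewrite /bnd big1 // => v vt.
have [->|/cT[_ cl]] := eqVneq (c (v |: t)) 0; first by rewrite mulr0.
rewrite cardsU1 vt add1n => -[szt]; case/negP: nft.
by rewrite /flag (clique_subset (subsetUr _ _) cl) andbT -card_gt0 szt.
Qed.

Definition chain_of (u : 'rV[F]_#|{set X}|) s := u 0 (enum_rank s).

Definition flag_part n c s := if flag s && (#|s| == n) then c s else 0.


Lemma row_mul_bd_mx (u : 'rV[F]_#|{set X}|) m j :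
  (u *m bd_mx F flag m) 0 j =
  if flag (enum_val j) then bnd (flag_part m.+1 (chain_of u)) (enum_val j) else 0.
Proof.
rewrite mxE (reindex (@enum_rank _)) /=; last first.
  by exists enum_val => i _; rewrite ?enum_valK ?enum_rankK.
under eq_bigr => s _ do [rewrite mxE enum_rankK; cbv zeta].
set t := enum_val j.
have [ft|nft] := boolP (flag t); last first.
  by rewrite big1 // => s _; rewrite andbF mulr0.
transitivity (\sum_(s : {set X}) \sum_(v in s | t == s :\ v)
                face_sign F (s :\ v) v * flag_part m.+1 (chain_of u) s).
  apply: eq_bigr => s _; rewrite /flag_part /chain_of /=; case: ifP => _.
    rewrite mulr_sumr; apply: eq_bigr => v /andP[vs _].
    by rewrite mulrC -{1}(setD1K vs) face_sign_setU1_id.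
  by rewrite mulr0 big1 // => v _; rewrite mulr0.
by rewrite sum_cofacets; apply: eq_bigr => v vt; rewrite setU1K.
Qed.

Lemma chain_of_row c : chain_of (\row_i c (enum_val i)) =1 c.
Proof. by move=> s; rewrite /chain_of mxE enum_rankK. Qed.

Lemma chain_on_chain_mx (u : 'rV[F]_#|{set X}|) n :
  (u <= chain_mx F flag n)%MS -> chain_on setT n.+1 (chain_of u).
Proof.
move=> /submxP[w ->] s; rewrite /chain_of mxE (bigD1 (enum_rank s)) //= big1 => [|i ne].
  rewrite mxE eqxx enum_rankK /= addr0; case: ifP => [|_]; last by rewrite mulr0 eqxx.
  by case/andP=> /andP[_ cl] /eqP sz _; rewrite subsetT cl sz.
by rewrite mxE (negbTE ne) mulr0.
Qed.

Lemma flag_part_chain_on n c : chain_on setT n.+1 c -> flag_part n.+1 c =1 c.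
Proof.
move=> cT s; rewrite /flag_part; case: ifP => // nfs.
apply/esym/eqP; apply: contraFT nfs => cs.
by have [_ _ ->] := cT _ cs; rewrite (chain_on_flag cT cs) eqxx.
Qed.

Lemma Hk_flag_zero n : acyclic setT n.+2 -> ~~ Hk_nonzero F flag n.+1.
Proof.
move=> ac; rewrite negbK; apply/rV_subP => u.
rewrite sub_capmx => /andP[uC /sub_kermxP uK].
have cu := chain_on_chain_mx uC.
have cyc : is_cycle (chain_of u).
  move=> t; have [ft|nft] := boolP (flag t); last exact: bnd_nonflag cu nft.
  move/rowP: uK => /(_ (enum_rank t)); rewrite row_mul_bd_mx enum_rankK ft mxE.
  by rewrite (eq_bnd (flag_part_chain_on cu)).
have [b bT bnd_b] := ac _ cu cyc.
have fb : flag_part n.+3 (chain_of (\row_i b (enum_val i))) =1 b.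
  by move=> s; rewrite /flag_part chain_of_row; apply: flag_part_chain_on bT s.
apply/submxP; exists (\row_i b (enum_val i)); apply/rowP => j.
have -> : u 0 j = chain_of u (enum_val j) by rewrite /chain_of enum_valK.
rewrite row_mul_bd_mx (eq_bnd fb) bnd_b; case: ifP => // nft.
by apply/eqP; apply: contraFT nft; apply: chain_on_flag cu.
Qed.

Lemma H0_flag_nonzero x : Hk_nonzero F flag 0.
Proof.
pose u : 'rV[F]_#|{set X}| := delta_mx 0 (enum_rank [set x]).
have chain_u s : chain_of u s = (s == [set x])%:R.
  by rewrite /chain_of mxE (inj_eq enum_rank_inj).
have uC : (u <= chain_mx F flag 0)%MS.
  apply/submxP; exists u; rewrite -rowE; apply/rowP => j.
  by rewrite !mxE enum_rankK flag1 cards1 eqxx !andbT eq_sym; case: eqP.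
have cu := chain_on_chain_mx uC.
have uK : (u <= kermx (bd_mx F flag 0))%MS.
  apply/sub_kermxP/rowP => j; rewrite row_mul_bd_mx mxE; case: ifP => // /andP[t0 _].
  by rewrite (eq_bnd (flag_part_chain_on cu)) (bnd_eq0_card cu) // eqSS cards_eq0.
(* The augmentation, summing the coefficients of vertices, is 1 on u but 0 on boundaries. *)
have u_nbd : ~~ (u <= bd_mx F flag 1)%MS.
  apply/negP => /submxP[w uw].
  have : \sum_(t : {set X} | #|t| == 1%N) chain_of u t = 1.
    rewrite (bigD1 [set x]) ?cards1 //= chain_u eqxx big1 ?addr0 // => t /andP[_ tx].
    by rewrite chain_u (negbTE tx).
  rewrite (eq_bigr (bnd (flag_part 2 (chain_of w)))) => [|t /cards1P[y ->]].
    rewrite sum_bnd_vertices => [|s]; first by move/eqP; rewrite eq_sym oner_eq0.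
    by rewrite /flag_part; case: ifP => [/andP[_ /eqP]|]; rewrite ?eqxx.
  by rewrite /chain_of uw row_mul_bd_mx enum_rankK flag1.
by apply: contra u_nbd => /(submx_trans _); apply; rewrite sub_capmx uC uK.
Qed.

Lemma Hk_flag_non_neighbours k x : #|X| = (2 * k.+1 + 2)%N ->
  Hk_nonzero F flag k.+1 -> #|non_neighbours setT x| = 1%N.
Proof.
move=> cardX; apply: contraTeq => degx; apply: Hk_flag_zero.
by apply: acyclic_setT_degree degx; lia.
Qed.

End Flag.

Lemma non_neighbours_sandwich (X : finType) (E1 E2 E3 : rel X) :
  subrel E1 E2 -> subrel E2 E3 ->
  (forall x, #|non_neighbours E1 setT x| = 1%N) ->
  (forall x, #|non_neighbours E3 setT x| = 1%N) -> E2 =2 E1.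
Proof.
move=> E12 E23 N1 N3 x y; apply/idP/idP => [E2xy|/E12 //].
have sub31 : non_neighbours E3 setT x \subset non_neighbours E1 setT x.
  by apply/subsetP => z; rewrite !inE; apply: contra => /E12/E23.
have eqN := subset_cardP (etrans (N3 x) (esym (N1 x))) sub31.
by apply/negPn/negP => nE1xy; move: (eqN y); rewrite !inE nE1xy (E23 _ _ E2xy).
Qed.

Section DynamicRips.
Variables (R : realType) (X : finType) (d : R -> X -> X -> R).
Hypothesis d_pseudo : forall t, is_pseudometric (d t).
Implicit Types (a b t : R) (x y : X) (p q : dyn R).

Definition dyn_rel p : rel X :=
  fun x y => dist_on d (dyn_a p) (dyn_b p) x y <= dyn_delta p.

Lemma dist_on_le a b t x y : a <= t <= b -> dist_on d a b x y <= d t x y.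
Proof.
move=> abt; apply: ge_inf; last by exists t.
by exists 0 => _ [t' _ <-]; case: (d_pseudo t') => _ ->.
Qed.

Lemma dist_onC a b x y : dist_on d a b x y = dist_on d a b y x.
Proof.
by congr inf; apply: eq_imagel => t _; case: (d_pseudo t) => _ _ ->.
Qed.

Lemma dist_on_widen a b a' b' x y : a' <= a -> b <= b' -> a <= b ->
  dist_on d a' b' x y <= dist_on d a b x y.
Proof.
move=> a'a bb' ab; apply: lb_le_inf.
  by exists (d a x y); exists a => //=; rewrite lexx ab.
move=> _ [t /andP[le_at le_tb] <-]; apply: dist_on_le.
by rewrite (le_trans a'a le_at) (le_trans le_tb bb').
Qed.

Lemma dyn_rel_refl p : dyn_valid p -> reflexive (dyn_rel p).
Proof.
case=> ab dp x; apply: le_trans (dist_on_le x x (t := dyn_a p) _) _.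
  by rewrite lexx ab.
by case: (d_pseudo (dyn_a p)) => ->.
Qed.

Lemma dyn_rel_sym p : symmetric (dyn_rel p).
Proof. by move=> x y; rewrite /dyn_rel dist_onC. Qed.

Lemma dyn_rel_mono p q : dyn_valid p -> dyn_le p q -> subrel (dyn_rel p) (dyn_rel q).
Proof.
case=> ab _ [qp pq dpq] x y pxy; apply: le_trans (le_trans pxy dpq).
exact: dist_on_widen.
Qed.

End DynamicRips.

Theorem mainTheorem2 (k : nat) (R : realType) (F : fieldType) (X : finType)
  (d : R -> X -> X -> R) :
  #|X| = (2 * k + 2)%N ->
  is_DMS d ->
  forall p q r : dyn R,
    dyn_valid p -> dyn_valid q -> dyn_valid r ->
    dyn_le p q -> dyn_le q r ->
    in_supp F d k p -> in_supp F d k r -> in_supp F d k q.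
Proof.
move=> cardX [d_pseudo _] p q r vp vq vr pq qr.
change (Hk_nonzero F (flag (dyn_rel d p)) k -> Hk_nonzero F (flag (dyn_rel d r)) k ->
        Hk_nonzero F (flag (dyn_rel d q)) k).
case: k cardX => [|k] cardX hp hr.
  have /card_gt0P[x _] : (0 < #|X|)%N by rewrite cardX.
  exact: H0_flag_nonzero (dyn_rel_refl d_pseudo vq) F x.
have co_matching p' : dyn_valid p' -> Hk_nonzero F (flag (dyn_rel d p')) k.+1 ->
    forall x, #|non_neighbours (dyn_rel d p') setT x| = 1%N.
  move=> vp' hp' x.
  exact: (@Hk_flag_non_neighbours _ _ (dyn_rel_refl d_pseudo vp') (dyn_rel_sym d_pseudo p')
           F k x cardX hp').
suff -> : dyn_rel d q = dyn_rel d p by [].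
apply/funext => x; apply/funext => y.
apply: (non_neighbours_sandwich (E3 := dyn_rel d r)).
- exact: dyn_rel_mono pq.
- exact: dyn_rel_mono qr.
- exact: co_matching vp hp.
- exact: co_matching vr hr.
Qed.
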